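(* Let $\pi(m)=(1/2)^m$ for $m\in\mathbb{N}^+$ (and $\pi(m)=0$ otherwise), and let the proposal be $q(m,\{m+1\})=\theta=1-q(m,\{m-1\})$ for $m\in\mathbb{Z}$, with $\theta\in(0,1)$. Take $N=1$ and homogeneous weights $W_{m,1}=W=(b-\varepsilon)\,\mathrm{Ber}(s)+\varepsilon$ for all $m$, where $b>1$, $\varepsilon\in(0,1)$, $\mathrm{Ber}(s)$ is a Bernoulli random variable with parameter $s\in(0,1)$, and $s=\frac{1-\varepsilon}{b-\varepsilon}$ so that $\mathbb{E}[W]=1$. Then there exist values of $b$, $\varepsilon$ and $\theta$ for which the Markov chain generated by the noisy kernel $\tilde P_1$ is transient.
   Context: Noisy Metropolis–Hastings kernel $\tilde P_N$: from state $m$, propose $Y\sim q(m,\cdot)$, draw independent weights $W\sim Q_{m,N}$, $U\sim Q_{Y,N}$ (the laws of $W_{m,N}$, $W_{Y,N}$), and move to $Y$ with probability $\min\{1,\frac{\pi(Y)q(Y,m)}{\pi(m)q(m,Y)}\cdot\frac{U}{W}\}$, otherwise stay at $m$ (proposals outside $\mathbb{N}^+$ have $\pi(Y)=0$ and are rejected). *)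

From Stdlib Require Import Reals ZArith List.
Import ListNotations.
Open Scope R_scope.

Definition lsum {A : Type} (f : A -> R) (l : list A) : R :=
  fold_right (fun a acc => f a + acc) 0 l.

(* law of a finitely supported nonnegative weight: list of (value, probability) *)
Definition wlaw := list (R * R).

(* Expected acceptance probability of the noisy MH kernel when at x proposing y:
   E[ min{1, pi(y)q(y,x)/(pi(x)q(x,y)) * U/W} ], W ~ Q x, U ~ Q y independent. *)
Definition noisy_acc (pi : Z -> R) (q : Z -> Z -> R) (Q : Z -> wlaw) (x y : Z) : R :=
  lsum (fun wp => lsum (fun up =>
     snd wp * snd up *
     Rmin 1 ((pi y * q y x) / (pi x * q x y) * (fst up / fst wp))) (Q y)) (Q x).

(* Noisy Metropolis-Hastings kernel; the proposal q(x,.) is supported on the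
   finite duplicate-free list [prop x] (not containing x). *)
Definition noisy_MH (pi : Z -> R) (q : Z -> Z -> R) (prop : Z -> list Z)
    (Q : Z -> wlaw) (x y : Z) : R :=
  lsum (fun z => q x z * noisy_acc pi q Q x z * (if Z.eq_dec z y then 1 else 0)) (prop x)
  + (if Z.eq_dec x y then 1 - lsum (fun z => q x z * noisy_acc pi q Q x z) (prop x) else 0).

(* First-passage (taboo) probabilities for a kernel P whose row P(x,.) is
   supported on the list [supp x]:  fp n x y = P_x(first hitting time of y
   at steps >= 1 equals n). *)
Fixpoint first_passage (P : Z -> Z -> R) (supp : Z -> list Z) (n : nat) (x y : Z) : R :=
  match n with
  | O => 0
  | S O => P x y
  | S n' => lsum (fun z => if Z.eq_dec z y then 0 else P x z * first_passage P supp n' z y)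
                 (nodup Z.eq_dec (supp x))
  end.

Definition return_prob_is (P : Z -> Z -> R) (supp : Z -> list Z) (x : Z) (l : R) : Prop :=
  infinite_sum (fun n => first_passage P supp (S n) x x) l.

Definition transient_chain (P : Z -> Z -> R) (supp : Z -> list Z) (S : Z -> Prop) : Prop :=
  forall x, S x -> exists l, return_prob_is P supp x l /\ l < 1.

Definition pi_ex (m : Z) : R := if Z.ltb 0 m then (1/2) ^ (Z.to_nat m) else 0.

Definition q_ex (theta : R) (x y : Z) : R :=
  if Z.eq_dec y (x + 1) then theta
  else if Z.eq_dec y (x - 1) then 1 - theta else 0.

Definition prop_ex (x : Z) : list Z := [x + 1; x - 1]%Z.

Definition W_ex (b eps : R) : wlaw :=
  let s := (1 - eps) / (b - eps) in [(b, s); (eps, 1 - s)].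

Definition P_ex (b eps theta : R) : Z -> Z -> R :=
  noisy_MH pi_ex (q_ex theta) prop_ex (fun _ => W_ex b eps).

Definition supp_ex (x : Z) : list Z := x :: prop_ex x.

From Stdlib Require Import Reals ZArith List Lra Lia.
Import ListNotations.
Open Scope R_scope.

(* Take b = 4, eps = 1/4 (so W is 4 w.p. 1/5 and 1/4 w.p. 4/5) and theta = 8/9.
   Since pi(m+1)/pi(m) = 1/2, an upward move has MH ratio 1/16 and a downward
   move ratio 16; with the noise, downward moves are still always accepted,
   while upward moves are accepted with probability 13/64 > 1/16.
   On m >= 2 the chain thus steps up w.p. 13/72 and down w.p. 8/72, a drift to
   +oo.  The function equal to 1 on (-oo, y] and to (8/13)^(m-y) above y is
   excessive for the chain killed at y (harmonic above y), so it dominates the probability of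
   hitting y, and the return probability to y is at most 67/72. *)

Lemma lsum_plus {A : Type} (f g : A -> R) (l : list A) :
  lsum (fun a => f a + g a) l = lsum f l + lsum g l.
Proof. induction l as [|a l IH]; simpl; [lra | rewrite IH; lra]. Qed.

Lemma lsum_ext {A : Type} (f g : A -> R) (l : list A) :
  (forall a, In a l -> f a = g a) -> lsum f l = lsum g l.
Proof.
  induction l as [|a l IH]; simpl; intros Hfg; [reflexivity|].
  rewrite Hfg, IH; auto.
Qed.

Lemma lsum_le {A : Type} (f g : A -> R) (l : list A) :
  (forall a, In a l -> f a <= g a) -> lsum f l <= lsum g l.
Proof.
  induction l as [|a l IH]; simpl; intros Hfg; [lra|].
  assert (f a <= g a) by auto. assert (lsum f l <= lsum g l) by auto. lra.
Qed.

Lemma lsum_nonneg {A : Type} (f : A -> R) (l : list A) :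
  (forall a, In a l -> 0 <= f a) -> 0 <= lsum f l.
Proof.
  induction l as [|a l IH]; simpl; intros Hf; [lra|].
  assert (0 <= f a) by auto. assert (0 <= lsum f l) by auto. lra.
Qed.

Section FirstPassage.
Variable P : Z -> Z -> R.
Variable supp : Z -> list Z.
Variable y : Z.

Definition taboo_step (f : Z -> R) (w : Z) : R :=
  P w y + lsum (fun z => if Z.eq_dec z y then 0 else P w z * f z)
                (nodup Z.eq_dec (supp w)).

Fixpoint hit_within (n : nat) (w : Z) : R :=
  match n with
  | O => 0
  | S n' => hit_within n' w + first_passage P supp (S n') w y
  end.

Lemma hit_within_S (n : nat) (w : Z) :
  hit_within (S n) w = taboo_step (hit_within n) w.
Proof.
  unfold taboo_step. revert w; induction n as [|n IH]; intros w.
  - rewrite (lsum_ext _ (fun _ => 0)).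
    + simpl. induction (nodup Z.eq_dec (supp w)); simpl; lra.
    + intros z _. destruct Z.eq_dec; simpl; lra.
  - change (hit_within (S (S n)) w)
      with (hit_within (S n) w + first_passage P supp (S (S n)) w y).
    rewrite IH. cbn [first_passage]. rewrite Rplus_assoc, <- lsum_plus.
    f_equal. apply lsum_ext; intros z _. destruct Z.eq_dec; simpl; lra.
Qed.

Lemma return_partial_sum (N : nat) :
  sum_f_R0 (fun n => first_passage P supp (S n) y y) N = hit_within (S N) y.
Proof.
  induction N as [|N IH]; [simpl; lra|].
  change (sum_f_R0 (fun n => first_passage P supp (S n) y y) N
          + first_passage P supp (S (S N)) y y = hit_within (S (S N)) y).
  rewrite IH; reflexivity.
Qed.

Hypothesis P_nonneg : forall w z, 0 <= P w z.

Lemma first_passage_nonneg (n : nat) (w : Z) : 0 <= first_passage P supp n w y.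
Proof.
  revert w; induction n as [|[|n] IH]; intros w; simpl; try lra; auto.
  apply lsum_nonneg; intros z _. destruct Z.eq_dec; [lra|].
  apply Rmult_le_pos; [apply P_nonneg | apply IH].
Qed.

Lemma hit_within_le_S (n : nat) (w : Z) : hit_within n w <= hit_within (S n) w.
Proof. pose proof (first_passage_nonneg (S n) w). cbn [hit_within]; lra. Qed.

Lemma taboo_step_le (f g : Z -> R) (w : Z) :
  (forall z, z <> y -> f z <= g z) -> taboo_step f w <= taboo_step g w.
Proof.
  intros Hfg. unfold taboo_step. apply Rplus_le_compat_l, lsum_le; intros z _.
  destruct Z.eq_dec; [lra|]. apply Rmult_le_compat_l; auto.
Qed.

Variable h : Z -> R.
Variable c : R.
Hypothesis h_nonneg : forall z, 0 <= h z.
Hypothesis h_excessive : forall w, w <> y -> taboo_step h w <= h w.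
Hypothesis h_return : taboo_step h y <= c.
Hypothesis c_lt1 : c < 1.

Lemma hit_within_le (n : nat) (w : Z) : w <> y -> hit_within n w <= h w.
Proof.
  revert w; induction n as [|n IH]; intros w Hw; [simpl; auto|].
  rewrite hit_within_S. eapply Rle_trans; [apply taboo_step_le | auto]; auto.
Qed.

Lemma hit_within_return (n : nat) : hit_within n y <= c.
Proof.
  eapply Rle_trans; [apply hit_within_le_S|].
  rewrite hit_within_S. eapply Rle_trans; [|exact h_return].
  apply taboo_step_le; intros z Hz; apply hit_within_le; auto.
Qed.

Lemma transient_state_of_excessive : exists l, return_prob_is P supp y l /\ l < 1.
Proof.
  set (u := sum_f_R0 (fun n => first_passage P supp (S n) y y)).
  assert (u_le : forall n, u n <= c).
  { intros n. unfold u. rewrite return_partial_sum. apply hit_within_return. }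
  assert (u_growing : Un_growing u).
  { intros n. unfold u. rewrite !return_partial_sum. apply hit_within_le_S. }
  assert (u_bounded : has_ub u) by (exists c; intros x [n ->]; apply u_le).
  destruct (growing_cv u u_growing u_bounded) as [l Hl].
  exists l; split; [exact Hl|].
  assert (l <= c); [|lra].
  apply (Rle_cv_lim (Un := u) (Vn := fun _ => c)); auto.
  intros e He; exists O; intros; unfold Rdist. rewrite Rminus_diag, Rabs_R0; lra.
Qed.

End FirstPassage.

Lemma pi_ex_pos (m : Z) : (0 < m)%Z -> 0 < pi_ex m.
Proof.
  intros Hm. unfold pi_ex. replace (Z.ltb 0 m) with true by (symmetry; apply Z.ltb_lt; lia).
  apply pow_lt; lra.
Qed.

Lemma pi_ex_nonpos (m : Z) : (m <= 0)%Z -> pi_ex m = 0.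
Proof.
  intros Hm. unfold pi_ex.
  replace (Z.ltb 0 m) with false by (symmetry; apply Z.ltb_ge; lia). reflexivity.
Qed.

Lemma pi_ex_succ (m : Z) : (0 < m)%Z -> pi_ex (m + 1) = pi_ex m / 2.
Proof.
  intros Hm. unfold pi_ex.
  replace (Z.ltb 0 m) with true by (symmetry; apply Z.ltb_lt; lia).
  replace (Z.ltb 0 (m + 1)) with true by (symmetry; apply Z.ltb_lt; lia).
  replace (Z.to_nat (m + 1)) with (S (Z.to_nat m)) by lia. simpl; lra.
Qed.

Lemma q_ex_up (t : R) (x : Z) : q_ex t x (x + 1) = t.
Proof. unfold q_ex. destruct Z.eq_dec; [reflexivity | lia]. Qed.

Lemma q_ex_down (t : R) (x : Z) : q_ex t x (x - 1) = 1 - t.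
Proof. unfold q_ex. do 2 (destruct Z.eq_dec; try lia). reflexivity. Qed.

Lemma q_ex_from_up (t : R) (x : Z) : q_ex t (x + 1) x = 1 - t.
Proof. unfold q_ex. do 2 (destruct Z.eq_dec; try lia). reflexivity. Qed.

Lemma q_ex_from_down (t : R) (x : Z) : q_ex t (x - 1) x = t.
Proof. unfold q_ex. destruct Z.eq_dec; [reflexivity | lia]. Qed.

Definition W0 : wlaw := [(4, 1/5); (1/4, 4/5)].

Lemma W_ex_4_quarter : W_ex 4 (1/4) = W0.
Proof.
  unfold W_ex, W0. cbv zeta.
  replace ((1 - 1/4) / (4 - 1/4)) with (1/5) by field.
  replace (1 - 1/5) with (4/5) by field. reflexivity.
Qed.

Definition mean_acc (r : R) : R :=
  lsum (fun wp => lsum (fun up => snd wp * snd up * Rmin 1 (r * (fst up / fst wp))) W0) W0.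

Definition acc0 (x y : Z) : R := noisy_acc pi_ex (q_ex (8/9)) (fun _ => W_ex 4 (1/4)) x y.

Lemma acc0_mean_acc (x y : Z) :
  acc0 x y = mean_acc (pi_ex y * q_ex (8/9) y x / (pi_ex x * q_ex (8/9) x y)).
Proof. unfold acc0, noisy_acc. rewrite W_ex_4_quarter. reflexivity. Qed.

Lemma mean_acc_0 : mean_acc 0 = 0.
Proof.
  unfold mean_acc, W0. cbn [lsum fold_right fst snd].
  rewrite !Rmult_0_l, Rmin_right by lra. lra.
Qed.

Lemma mean_acc_16th : mean_acc (1/16) = 13/64.
Proof.
  unfold mean_acc, W0. cbn [lsum fold_right fst snd].
  rewrite !Rmin_right by lra. lra.
Qed.

Lemma mean_acc_16 : mean_acc 16 = 1.
Proof.
  unfold mean_acc, W0. cbn [lsum fold_right fst snd].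
  rewrite !Rmin_left by lra. lra.
Qed.

Definition up_rate (w : Z) : R := 8/9 * acc0 w (w + 1).
Definition down_rate (w : Z) : R := (1 - 8/9) * acc0 w (w - 1).

Lemma up_rate_pos (w : Z) : (0 < w)%Z -> up_rate w = 13/72.
Proof.
  intros Hw. unfold up_rate. rewrite acc0_mean_acc, q_ex_up, q_ex_from_up, pi_ex_succ by exact Hw.
  pose proof (pi_ex_pos w Hw).
  replace (pi_ex w / 2 * (1 - 8/9) / (pi_ex w * (8/9))) with (1/16) by (field; lra).
  rewrite mean_acc_16th. lra.
Qed.

Lemma up_rate_nonpos (w : Z) : (w <= 0)%Z -> up_rate w = 0.
Proof.
  intros Hw. unfold up_rate.
  rewrite acc0_mean_acc, (pi_ex_nonpos w Hw), Rmult_0_l, Rdiv_0_r, mean_acc_0. lra.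
Qed.

Lemma down_rate_ge2 (w : Z) : (2 <= w)%Z -> down_rate w = 1/9.
Proof.
  intros Hw. unfold down_rate. rewrite acc0_mean_acc, q_ex_down, q_ex_from_down.
  replace (pi_ex w) with (pi_ex (w - 1) / 2)
    by (rewrite <- pi_ex_succ by lia; f_equal; lia).
  pose proof (pi_ex_pos (w - 1) ltac:(lia)).
  replace (pi_ex (w - 1) * (8/9) / (pi_ex (w - 1) / 2 * (1 - 8/9))) with 16 by (field; lra).
  rewrite mean_acc_16. lra.
Qed.

Lemma down_rate_le1 (w : Z) : (w <= 1)%Z -> down_rate w = 0.
Proof.
  intros Hw. unfold down_rate.
  rewrite acc0_mean_acc, (pi_ex_nonpos (w - 1)) by lia.
  rewrite !Rmult_0_l, Rdiv_0_l, mean_acc_0. lra.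
Qed.

Lemma rates_bounds (w : Z) : 0 <= up_rate w /\ 0 <= down_rate w /\ up_rate w + down_rate w <= 1.
Proof.
  destruct (Z_le_gt_dec w 0).
  - rewrite up_rate_nonpos, down_rate_le1 by lia. lra.
  - rewrite up_rate_pos by lia. destruct (Z.eq_dec w 1).
    + rewrite down_rate_le1 by lia; lra.
    + rewrite down_rate_ge2 by lia; lra.
Qed.

Definition P0 : Z -> Z -> R := P_ex 4 (1/4) (8/9).

Lemma P0_expand (w z : Z) : P0 w z =
  up_rate w * (if Z.eq_dec (w + 1) z then 1 else 0) +
  (down_rate w * (if Z.eq_dec (w - 1) z then 1 else 0) + 0) +
  (if Z.eq_dec w z then 1 - (up_rate w + (down_rate w + 0)) else 0).
Proof.
  unfold P0, P_ex, noisy_MH, prop_ex. cbn [lsum fold_right].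
  rewrite q_ex_up, q_ex_down. reflexivity.
Qed.

Lemma P0_self (w : Z) : P0 w w = 1 - up_rate w - down_rate w.
Proof. rewrite P0_expand. repeat destruct Z.eq_dec; try lia. lra. Qed.

Lemma P0_up (w : Z) : P0 w (w + 1) = up_rate w.
Proof. rewrite P0_expand. repeat destruct Z.eq_dec; try lia. lra. Qed.

Lemma P0_down (w : Z) : P0 w (w - 1) = down_rate w.
Proof. rewrite P0_expand. repeat destruct Z.eq_dec; try lia. lra. Qed.

Lemma P0_far (w z : Z) : z <> w -> z <> (w + 1)%Z -> z <> (w - 1)%Z -> P0 w z = 0.
Proof. intros. rewrite P0_expand. repeat destruct Z.eq_dec; try lia. lra. Qed.

Lemma P0_nonneg (w z : Z) : 0 <= P0 w z.
Proof.
  pose proof (rates_bounds w).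
  destruct (Z.eq_dec z w) as [->|]; [rewrite P0_self; lra|].
  destruct (Z.eq_dec z (w + 1)) as [->|]; [rewrite P0_up; lra|].
  destruct (Z.eq_dec z (w - 1)) as [->|]; [rewrite P0_down; lra|].
  rewrite P0_far; auto; lra.
Qed.

Lemma nodup_supp_ex (w : Z) : nodup Z.eq_dec (supp_ex w) = [w; (w + 1)%Z; (w - 1)%Z].
Proof. unfold supp_ex, prop_ex. simpl. repeat (destruct Z.eq_dec; try lia). reflexivity. Qed.

(* Killing at y costs nothing for a test function with f y = 1. *)
Lemma taboo_step_P0 (y : Z) (f : Z -> R) (w : Z) : f y = 1 ->
  taboo_step P0 supp_ex y f w =
  (1 - up_rate w - down_rate w) * f w + up_rate w * f (w + 1)%Z
  + down_rate w * f (w - 1)%Z.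
Proof.
  intros Hfy. unfold taboo_step. rewrite nodup_supp_ex. cbn [lsum fold_right].
  destruct (Z.eq_dec y w) as [->|];
    [|destruct (Z.eq_dec y (w + 1)) as [->|];
      [|destruct (Z.eq_dec y (w - 1)) as [->|]]];
    repeat (destruct Z.eq_dec; try lia);
    rewrite ?P0_self, ?P0_up, ?P0_down, ?Hfy; try lra.
  rewrite P0_far by auto. lra.
Qed.
Definition lyap (y z : Z) : R := if Z_le_dec z y then 1 else (8/13) ^ Z.to_nat (z - y).

Lemma lyap_le (y z : Z) : (z <= y)%Z -> lyap y z = 1.
Proof. intros; unfold lyap; destruct Z_le_dec; [reflexivity | lia]. Qed.

Lemma lyap_succ (y z : Z) : (y <= z)%Z -> lyap y (z + 1) = 8/13 * lyap y z.
Proof.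
  intros Hz. unfold lyap. destruct (Z_le_dec (z + 1) y); [lia|].
  replace (Z.to_nat (z + 1 - y)) with (S (Z.to_nat (z - y))) by lia.
  destruct Z_le_dec.
  - replace (Z.to_nat (z - y)) with O by lia. simpl; lra.
  - reflexivity.
Qed.

Lemma lyap_range (y z : Z) : 0 <= lyap y z <= 1.
Proof.
  unfold lyap; destruct Z_le_dec; [lra|]. split.
  - apply pow_le; lra.
  - rewrite <- (pow1 (Z.to_nat (z - y))). apply pow_incr; lra.
Qed.

Lemma lyap_excessive (y w : Z) : (1 <= y)%Z -> w <> y ->
  taboo_step P0 supp_ex y (lyap y) w <= lyap y w.
Proof.
  intros Hy Hw. rewrite taboo_step_P0 by (apply lyap_le; lia).
  destruct (Z_lt_le_dec w y).
  - pose proof (rates_bounds w).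
    pose proof (lyap_range y (w + 1)); pose proof (lyap_range y (w - 1)).
    rewrite lyap_le by lia. nra.
  - rewrite up_rate_pos, down_rate_ge2 by lia.
    rewrite lyap_succ by lia.
    replace (lyap y w) with (8/13 * lyap y (w - 1)) by (rewrite <- lyap_succ by lia; f_equal; lia).
    lra.
Qed.

Lemma lyap_return (y : Z) : (1 <= y)%Z -> taboo_step P0 supp_ex y (lyap y) y <= 67/72.
Proof.
  intros Hy. rewrite taboo_step_P0 by (apply lyap_le; lia).
  rewrite lyap_succ, !lyap_le by lia.
  pose proof (rates_bounds y). rewrite up_rate_pos by lia. lra.
Qed.

Theorem proposition2p2 :
  exists b eps theta : R,
    1 < b /\ 0 < eps < 1 /\ 0 < theta < 1 /\
    transient_chain (P_ex b eps theta) supp_ex (fun m => (0 < m)%Z).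
Proof.
  exists 4, (1/4), (8/9). split; [lra|]. split; [lra|]. split; [lra|].
  intros y Hy. change (P_ex 4 (1/4) (8/9)) with P0.
  apply (transient_state_of_excessive P0 supp_ex y P0_nonneg (lyap y) (67/72)).
  - intros z; apply lyap_range.
  - intros w Hw; apply lyap_excessive; [lia | exact Hw].
  - apply lyap_return; lia.
  - lra.
Qed.
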